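(* Let $G=(V,E)$ be a connected undirected simple graph with $n=|V|$ nodes, adjacency matrix $\tilde{\mathbf{A}}\in\{0,1\}^{n\times n}$ (zero diagonal), and node degrees $d_l=\sum_{j=1}^n\tilde{\mathbf{A}}_{lj}$. Let $\mathbf{D}$ be the diagonal matrix with $\mathbf{D}_{ll}=1+d_l$ and $\mathbf{A}=\mathbf{D}^{-1/2}(\tilde{\mathbf{A}}+\mathbf{I})\mathbf{D}^{-1/2}$. Let $\mathbf{W}\in\mathbb{R}^{c\times c}$, $\mathbf{B}\in\mathbb{R}^{c'\times c}$, inputs $\mathbf{U}_t\in\mathbb{R}^{n\times c'}$, and consider the recurrence $\mathbf{X}_{t+1}=\mathbf{A}\mathbf{X}_t\mathbf{W}+\mathbf{U}_{t+1}\mathbf{B}$, $\mathbf{X}_t\in\mathbb{R}^{n\times c}$. Then, for large values of $t-s$, the Jacobian from node $j$ at time $s$ to node $i$ at time $t\ge s$ admits the approximation $$\frac{\partial \mathbf{X}_t^{(i)}}{\partial \mathbf{X}_s^{(j)}}\approx\frac{\sqrt{(1+d_i)(1+d_j)}}{|V|+2|E|}\,(\mathbf{W}^{\top})^{t-s},$$ in the sense that $\frac{\partial \mathbf{X}_t^{(i)}}{\partial \mathbf{X}_s^{(j)}}=c_{ij}(t-s)\,(\mathbf{W}^{\top})^{t-s}$ for scalars $c_{ij}(t-s)$ satisfying $c_{ij}(t-s)\to\frac{\sqrt{(1+d_i)(1+d_j)}}{|V|+2|E|}$ as $t-s\to\infty$.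
   Context: $\mathbf{X}_t^{(i)}\in\mathbb{R}^{1\times c}$ denotes the $i$-th row of $\mathbf{X}_t$, regarded as a function of $\mathbf{X}_s$ through the recurrence with the inputs held fixed. The Jacobian $\partial\mathbf{y}/\partial\mathbf{x}$ of row vectors is the $c\times c$ matrix with $(p,q)$ entry $\partial y_p/\partial x_q$. $|E|$ is the number of undirected edges. *)

From HB Require Import structures.
From mathcomp Require Import all_boot all_order all_algebra.
From mathcomp Require Import all_classical all_reals all_analysis.
Set Implicit Arguments. Unset Strict Implicit. Unset Printing Implicit Defensive.
Import Order.TTheory GRing.Theory Num.Theory.
Import numFieldNormedType.Exports.
Local Open Scope ring_scope.

Definition simple_graph (n : nat) (e : rel 'I_n) : Prop :=
  (forall x y, e x y = e y x) /\ (forall x, e x x = false).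

Definition connected_graph (n : nat) (e : rel 'I_n) : Prop :=
  forall x y, connect e x y.

Definition adjmx (R : realType) (n : nat) (e : rel 'I_n) : 'M[R]_n :=
  \matrix_(l, j) (e l j)%:R.

Definition node_degree (R : realType) (n : nat) (e : rel 'I_n) (l : 'I_n) : R :=
  \sum_(j < n) adjmx R e l j.

Definition num_edges (n : nat) (e : rel 'I_n) : nat :=
  #|[set p : 'I_n * 'I_n | (p.1 < p.2)%N && e p.1 p.2]|.

Definition Dinvsqrt (R : realType) (n : nat) (e : rel 'I_n) : 'M[R]_n :=
  diag_mx (\row_l (Num.sqrt (1 + node_degree R e l))^-1).

Definition normadj (R : realType) (n : nat) (e : rel 'I_n) : 'M[R]_n :=
  Dinvsqrt R e *m (adjmx R e + 1%:M) *m Dinvsqrt R e.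

(* X_{s+k}, given X_s = X, via X_{t+1} = A X_t W + U_{t+1} B *)
Fixpoint gnn_recur (R : realType) (n c c' : nat) (A : 'M[R]_n) (W : 'M[R]_c)
  (B : 'M[R]_(c', c)) (U : nat -> 'M[R]_(n, c')) (s : nat) (X : 'M[R]_(n, c))
  (k : nat) : 'M[R]_(n, c) :=
  match k with
  | 0 => X
  | k'.+1 => A *m gnn_recur A W B U s X k' *m W + U (s + k'.+1)%N *m B
  end.

Definition replace_row (R : realType) (n c : nat) (X : 'M[R]_(n, c)) (j : 'I_n)
  (x : 'rV[R]_c) : 'M[R]_(n, c) :=
  \matrix_(k, q) (if k == j then x 0 q else X k q).

(* Jacobian d X_t^{(i)} / d X_s^{(j)} at X_s = X : the c x c matrix whose
   (p,q) entry is the partial derivative of the p-th entry of row i of X_t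
   with respect to the q-th entry of row j of X_s (inputs held fixed). *)
Definition jacobian_XtXs (R : realType) (n c c' : nat) (A : 'M[R]_n) (W : 'M[R]_c)
  (B : 'M[R]_(c', c)) (U : nat -> 'M[R]_(n, c')) (s t : nat)
  (X : 'M[R]_(n, c)) (i j : 'I_n) : 'M[R]_c :=
  \matrix_(p, q)
    'D_(delta_mx 0 q : 'rV[R]_c)
      (fun x : 'rV[R]_c => gnn_recur A W B U s (replace_row X j x) (t - s) i p)
      (row j X).

(** The recurrence is affine in X_s, so the Jacobian from node j to node i is
    the scalar (A^k)_ij times (W^T)^k, with k = t - s.  Writing D for the
    degree matrix of G with a self-loop at every node, A = D^{1/2} P D^{-1/2}
    where P = D^{-1}(Ã + I) is the transition matrix of the lazy random walk
    on G.  This walk is reversible, with stationary law pi_j = D_jj / (|V| + 2|E|),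
    and, G being connected with self-loops, every entry of P^n is at least
    (n+1)^{-n}; Doeblin's contraction argument then gives (P^k)_ij -> pi_j,
    hence (A^k)_ij -> sqrt(D_ii D_jj) / (|V| + 2|E|). *)
From HB Require Import structures.
From mathcomp Require Import all_boot all_order all_algebra.
From mathcomp Require Import all_classical all_reals all_analysis.
From mathcomp Require Import ring lra.
Set Implicit Arguments. Unset Strict Implicit. Unset Printing Implicit Defensive.
Import Order.TTheory GRing.Theory Num.Theory.
Import numFieldNormedType.Exports.
Local Open Scope classical_set_scope.
Local Open Scope ring_scope.

Lemma mulr_mxE (R : pzSemiRingType) (n : nat) (P Q : 'M[R]_n) x y :
  (P * Q) x y = \sum_z P x z * Q z y.
Proof. by rewrite -mulmxE mxE. Qed.

Definition row_stochastic (R : numDomainType) (n : nat) (P : 'M[R]_n) : Prop :=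
  (forall x y, 0 <= P x y) /\ (forall x, \sum_y P x y = 1).

Definition col_osc_le (R : numDomainType) (n : nat) (M : 'M[R]_n) (j : 'I_n)
    (w : R) : Prop :=
  exists lo hi, hi - lo <= w /\ forall l, lo <= M l j <= hi.

Section Stochastic.
Variables (R : realFieldType) (n : nat).
Implicit Types (P M : 'M[R]_n) (d w : R).

Lemma row_stochastic1 : row_stochastic (1 : 'M[R]_n).
Proof.
split=> [x y|x]; first by rewrite mxE ler0n.
rewrite (bigD1 x) //= big1 ?addr0 ?mxE ?eqxx // => y /negPf ney.
by rewrite mxE eq_sym ney.
Qed.

Lemma row_stochasticM P M :
  row_stochastic P -> row_stochastic M -> row_stochastic (P * M).
Proof.
move=> [P0 P1] [M0 M1]; split=> [x y|x].
  by rewrite mulr_mxE sumr_ge0 // => z _; apply: mulr_ge0.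
under eq_bigr do rewrite mulr_mxE.
rewrite exchange_big /= -(P1 x); apply: eq_bigr => z _.
by rewrite -mulr_sumr M1 mulr1.
Qed.

Lemma row_stochasticX P k : row_stochastic P -> row_stochastic (P ^+ k).
Proof.
move=> SP; elim: k => [|k IHk]; first by rewrite expr0; apply: row_stochastic1.
by rewrite exprS; apply: row_stochasticM.
Qed.

Lemma row_stochastic_lb_le1 P d :
  row_stochastic P -> (forall x y, d <= P x y) -> d *+ n <= 1.
Proof.
move=> [_ P1] Pd; have [->|n_gt0] := posnP n; first by rewrite mulr0n ler01.
rewrite -(P1 (Ordinal n_gt0)) -[n in d *+ n]card_ord -sumr_const.
by apply: ler_sum => y _.
Qed.

Lemma col_osc_le1 j : col_osc_le (1 : 'M[R]_n) j 1.
Proof.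
exists 0, 1; split; first by rewrite subr0.
by move=> l; rewrite mxE ler0n lern1 leq_b1.
Qed.

(* Doeblin: if every entry of P is at least d, the mass d of each row is spread
   uniformly, so only the remaining mass 1 - n d sees the oscillation of M. *)
Lemma col_osc_le_mul P M j d w :
  row_stochastic P -> (forall x y, d <= P x y) ->
  col_osc_le M j w -> col_osc_le (P * M) j ((1 - d *+ n) * w).
Proof.
move=> SP Pd [lo [hi [le_w Mj]]].
have rho_ge0 : 0 <= 1 - d *+ n by rewrite subr_ge0 (row_stochastic_lb_le1 SP Pd).
set S := \sum_z M z j.
have split_row x : (P * M) x j = \sum_z (P x z - d) * M z j + d * S.
  by rewrite mulr_mxE mulr_sumr -big_split; apply: eq_bigr => z _ /=; ring.
have excess_mass x : \sum_z (P x z - d) = 1 - d *+ n.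
  by rewrite sumrB SP.2 sumr_const card_ord.
exists ((1 - d *+ n) * lo + d * S), ((1 - d *+ n) * hi + d * S); split.
  rewrite opprD addrACA subrr addr0 -mulrBr.
  exact: ler_wpM2l.
move=> x; rewrite split_row -(excess_mass x) !mulr_suml lerD2r lerD2r.
apply/andP; split; apply: ler_sum => z _; apply: ler_wpM2l;
  rewrite ?subr_ge0 ?Pd //; by case/andP: (Mj z).
Qed.

Lemma col_osc_le_exp P j m d :
  row_stochastic P -> (forall x y, d <= (P ^+ m) x y) ->
  forall r q, col_osc_le (P ^+ (r + m * q)) j ((1 - d *+ n) ^+ q).
Proof.
move=> SP Pmd; elim=> [|r IHr] q.
  elim: q => [|q IHq]; first by rewrite muln0 !expr0; apply: col_osc_le1.
  rewrite add0n mulnS exprD exprS.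
  by apply: col_osc_le_mul => //; apply: row_stochasticX.
have P_ge0 x y : 0 <= P x y by apply: SP.1.
have := col_osc_le_mul SP P_ge0 (IHr q).
by rewrite mul0rn subr0 mul1r -exprS.
Qed.

Lemma stationaryX P (pi : 'I_n -> R) :
  (forall y, \sum_x pi x * P x y = pi y) ->
  forall k y, \sum_x pi x * (P ^+ k) x y = pi y.
Proof.
move=> pi_stat; elim=> [|k IHk] y.
  rewrite expr0 (bigD1 y) //= big1 ?addr0 ?mxE ?eqxx ?mulr1 // => x /negPf nexy.
  by rewrite mxE nexy mulr0.
rewrite -IHk; under eq_bigr do rewrite exprS mulr_mxE mulr_sumr.
rewrite exchange_big /=; apply: eq_bigr => z _.
by rewrite -pi_stat mulr_suml; apply: eq_bigr => x _; rewrite mulrA.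
Qed.

Lemma col_osc_le_stationary M (pi : 'I_n -> R) i j w :
  (forall x, 0 <= pi x) -> \sum_x pi x = 1 -> \sum_x pi x * M x j = pi j ->
  col_osc_le M j w -> `|pi j - M i j| <= w.
Proof.
move=> pi_ge0 pi_sum1 pi_stat [lo [hi [le_w Mj]]].
have [lo_pi pi_hi] : lo <= pi j /\ pi j <= hi.
  rewrite -pi_stat -[lo]mul1r -[hi]mul1r -pi_sum1 !mulr_suml.
  by split; apply: ler_sum => x _; apply: ler_wpM2l => //; case/andP: (Mj x).
case/andP: (Mj i) => lo_Mi Mi_hi.
by rewrite ler_norml; apply/andP; split; lra.
Qed.

End Stochastic.

Lemma row_stochastic_cvg (R : archiRealFieldType) (n : nat) (P : 'M[R]_n)
    (pi : 'I_n -> R) (i j : 'I_n) (m : nat) (d : R) :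
  row_stochastic P -> 0 < d -> (forall x y, d <= (P ^+ m) x y) ->
  (forall x, 0 <= pi x) -> \sum_x pi x = 1 ->
  (forall y, \sum_x pi x * P x y = pi y) ->
  (fun k => (P ^+ k) i j) @ \oo --> pi j.
Proof.
move=> SP d_gt0 Pmd pi_ge0 pi_sum1 pi_stat.
have n_gt0 : (0 < n)%N by apply: leq_ltn_trans (ltn_ord i).
have rho_ge0 : 0 <= 1 - d *+ n.
  by rewrite subr_ge0; apply: (row_stochastic_lb_le1 (row_stochasticX m SP)).
have rho_lt1 : `|1 - d *+ n| < 1.
  by rewrite ger0_norm // ltrBlDr ltrDl pmulrn_lgt0.
apply/cvgrPdist_lt => eps eps_gt0.
move/cvgrPdist_lt: (cvg_expr rho_lt1) => /(_ eps eps_gt0) [N _ rhoN].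
have := rhoN N (leqnn N); rewrite /= sub0r normrN ger0_norm ?exprn_ge0 // => rhoN_lt.
near=> k.
have le_mN_k : (m * N <= k)%N by near: k; exact: nbhs_infty_ge.
rewrite -(subnK le_mN_k); apply: le_lt_trans rhoN_lt.
apply: (col_osc_le_stationary _ pi_ge0 pi_sum1 (stationaryX pi_stat _ _)).
exact: col_osc_le_exp.
Unshelve. all: by end_near.
Qed.

Lemma derive_affine (R : numFieldType) (V W : normedModType R) (f : V -> W)
    (a v : V) (K : W) :
  (forall h : R, f (h *: v + a) - f a = h *: K) -> 'D_v f a = K.
Proof.
move=> f_affine; rewrite /derive; apply: cvg_lim => //.
apply: cvg_near_cst; near=> h.
rewrite /= /shift f_affine scalerA mulVf ?scale1r //.
near: h; exact: nbhs_dnbhs_neq.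
Unshelve. all: by end_near.
Qed.

Lemma trmxX (R : comPzSemiRingType) (c : nat) (W : 'M[R]_c) k : (W ^+ k)^T = W^T ^+ k.
Proof.
elim: k => [|k IHk]; first by rewrite !expr0 trmx1.
by rewrite exprS exprSr -mulmxE trmx_mul IHk mulmxE.
Qed.

Lemma mul_delta_mxE (R : pzSemiRingType) (m n p q : nat) (M : 'M[R]_(m, n))
    (N : 'M[R]_(p, q)) i j k l :
  (M *m delta_mx j k *m N) i l = M i j * N k l.
Proof.
rewrite !mxE (bigD1 k) //= big1 ?addr0; last first.
  move=> r /negPf nekr; rewrite !mxE big1 ?mul0r // => y _.
  by rewrite !mxE nekr andbF mulr0.
rewrite !mxE (bigD1 j) //= big1 ?addr0; last first.
  by move=> y /negPf neyj; rewrite !mxE neyj mulr0.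
by rewrite !mxE !eqxx mulr1.
Qed.

Section Jacobian.
Variables (R : realType) (n c c' : nat) (A : 'M[R]_n) (W : 'M[R]_c).
Variables (B : 'M[R]_(c', c)) (U : nat -> 'M[R]_(n, c')).

Lemma gnn_recur_affine s k :
  exists C, forall X, gnn_recur A W B U s X k = A ^+ k *m X *m W ^+ k + C.
Proof.
elim: k => [|k [C HC]] /=.
  by exists 0 => X; rewrite !expr0 mul1mx mulmx1 addr0.
exists (A *m C *m W + U (s + k.+1)%N *m B) => X.
rewrite HC mulmxDr mulmxDl addrA; congr (_ + _ + _).
by rewrite exprS exprSr -!mulmxE !mulmxA.
Qed.

Lemma replace_row_id (X : 'M[R]_(n, c)) j : replace_row X j (row j X) = X.
Proof. by apply/matrixP => k r; rewrite !mxE; case: eqP => [->|]. Qed.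

Lemma replace_row_shift (X : 'M[R]_(n, c)) j q (h : R) :
  replace_row X j (h *: delta_mx 0 q + row j X) = X + h *: delta_mx j q.
Proof.
apply/matrixP => k r; rewrite !mxE eqxx /=.
by case: (k =P j) => [->|_]; [rewrite addrC | rewrite mulr0 addr0].
Qed.

Lemma jacobian_XtXsE s t X i j :
  jacobian_XtXs A W B U s t X i j = (A ^+ (t - s)) i j *: W^T ^+ (t - s).
Proof.
have [C HC] := gnn_recur_affine s (t - s).
apply/matrixP => p q; rewrite !mxE -trmxX mxE.
apply: derive_affine => h.
rewrite replace_row_shift replace_row_id !HC mulmxDr mulmxDl -scalemxAr -scalemxAl.
by rewrite addrAC [X in X - _]mxE addrAC subrr add0r mxE mul_delta_mxE.
Qed.

End Jacobian.

Section LazyRandomWalk.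
Variables (R : realType) (n : nat) (e : rel 'I_n).

Definition loop_degree (l : 'I_n) : R := 1 + node_degree R e l.

Definition walk_mx : 'M[R]_n :=
  \matrix_(l, z) ((adjmx R e + 1%:M) l z / loop_degree l).

Lemma loop_degree_gt0 l : 0 < loop_degree l.
Proof.
by rewrite ltr_pwDl // sumr_ge0 // => z _; rewrite mxE ler0n.
Qed.

Lemma loop_degree_le l : loop_degree l <= n.+1%:R.
Proof.
rewrite /loop_degree addrC -natr1 lerD2r -[n in n%:R]card_ord -sumr_const.
by apply: ler_sum => z _; rewrite mxE lern1 leq_b1.
Qed.

Lemma loop_degreeE l : loop_degree l = \sum_z (adjmx R e + 1%:M) l z.
Proof.
under [RHS]eq_bigr do rewrite mxE.
rewrite big_split /= addrC; congr (_ + _).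
rewrite (bigD1 l) //= big1 ?addr0 ?mxE ?eqxx // => z /negPf nezl.
by rewrite mxE eq_sym nezl.
Qed.

Lemma walk_mx_stochastic : row_stochastic walk_mx.
Proof.
split=> [x y|x].
  by rewrite mxE divr_ge0 ?(ltW (loop_degree_gt0 x)) // !mxE addr_ge0 ?ler0n.
under eq_bigr do rewrite mxE.
by rewrite -mulr_suml -loop_degreeE divff // gt_eqF ?loop_degree_gt0.
Qed.

Lemma walk_mx_lb x y : e x y || (x == y) -> n.+1%:R^-1 <= walk_mx x y.
Proof.
move=> exy; have deg_gt0 := loop_degree_gt0 x; rewrite !mxE.
have adj_ge1 : 1 <= (e x y)%:R + (x == y)%:R :> R.
  by case/orP: exy => ->; rewrite mulr1n ?lerDl ?lerDr ler0n.
apply: le_trans (_ : (loop_degree x)^-1 <= _).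
  by rewrite lef_pV2 ?posrE ?ltr0Sn ?loop_degree_le.
by rewrite ler_pdivlMr // mulVf // gt_eqF.
Qed.

Lemma walk_mx_exprS_ge k x y z :
  walk_mx x y * (walk_mx ^+ k) y z <= (walk_mx ^+ k.+1) x z.
Proof.
have [Pk_ge0 _] := row_stochasticX k walk_mx_stochastic.
rewrite exprS mulr_mxE (bigD1 y) //= lerDl sumr_ge0 // => w _.
by rewrite mulr_ge0 ?walk_mx_stochastic.1.
Qed.

(* Self-loops let a walk along a path of length <= k wait at its endpoint. *)
Lemma walk_mxX_path_lb p x k : path e x p -> (size p <= k)%N ->
  n.+1%:R^-1 ^+ k <= (walk_mx ^+ k) x (last x p).
Proof.
have lb_ge0 : 0 <= n.+1%:R^-1 :> R by rewrite invr_ge0 ler0n.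
elim: p x k => [|y p IHp] x k /=.
  move=> _ _; elim: k => [|k IHk]; first by rewrite !expr0 mxE eqxx.
  apply: le_trans (walk_mx_exprS_ge k x x x); rewrite exprS.
  by apply: ler_pM; rewrite ?exprn_ge0 // walk_mx_lb ?eqxx ?orbT.
case/andP=> exy pathp; case: k => [//|k] /= size_le.
apply: le_trans (walk_mx_exprS_ge k x y _); rewrite exprS.
by apply: ler_pM; rewrite ?exprn_ge0 ?IHp // walk_mx_lb ?exy.
Qed.

Lemma walk_mxX_lb : connected_graph e ->
  forall x y, n.+1%:R^-1 ^+ n <= (walk_mx ^+ n) x y.
Proof.
move=> conn x y; have /connectP [p path_p ->] := conn x y.
have [p' path_p' uniq_p' _] := shortenP path_p.
apply: walk_mxX_path_lb path_p' _.
have := max_card (mem (x :: p')); rewrite card_ord.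
by move/card_uniqP: uniq_p' => -> /ltnW.
Qed.

Lemma walk_mx_reversible : simple_graph e ->
  forall x y, loop_degree x * walk_mx x y = loop_degree y * walk_mx y x.
Proof.
move=> [e_sym _] x y; rewrite !mxE e_sym eq_sym [LHS]mulrC [RHS]mulrC.
by rewrite !mulfVK // lt0r_neq0 // loop_degree_gt0.
Qed.

Lemma walk_mx_stationary : simple_graph e ->
  forall y, \sum_x (loop_degree x / \sum_l loop_degree l) * walk_mx x y
            = loop_degree y / \sum_l loop_degree l.
Proof.
move=> simple y.
under eq_bigr do rewrite mulrAC walk_mx_reversible // mulrAC.
by rewrite -mulr_sumr walk_mx_stochastic.2 mulr1.
Qed.

Lemma normadjXE k x y : (normadj R e ^+ k) x y =
  Num.sqrt (loop_degree x) / Num.sqrt (loop_degree y) * (walk_mx ^+ k) x y.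
Proof.
have sqrt_gt0 l : 0 < Num.sqrt (loop_degree l) by rewrite sqrtr_gt0 loop_degree_gt0.
have sqrtK l : Num.sqrt (loop_degree l) ^+ 2 = loop_degree l.
  by rewrite sqr_sqrtr // ltW ?loop_degree_gt0.
elim: k x y => [|k IHk] x y.
  rewrite !expr0 !mxE; case: eqP => [->|_]; last by rewrite !mulr0.
  by rewrite mulr1 mulfV // gt_eqF.
rewrite !exprSr !mulr_mxE mulr_sumr; apply: eq_bigr => l _.
rewrite IHk /normadj /Dinvsqrt mul_mx_diag mul_diag_mx !mxE -[in RHS](sqrtK l).
by field; rewrite !lt0r_neq0 ?sqrt_gt0.
Qed.

Lemma handshake : simple_graph e ->
  (\sum_(l < n) \sum_(z < n) e l z = 2 * num_edges e)%N.
Proof.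
case=> e_sym e_irr.
have e_split (l z : 'I_n) : ((e l z : nat) = ((l < z)%N && e l z) + ((z < l)%N && e l z))%N.
  case elz: (e l z); rewrite ?andbF //=.
  case: (ltngtP l z) => // /val_inj eqlz.
  by rewrite eqlz e_irr in elz.
have num_edgesE : num_edges e = (\sum_(l < n) \sum_(z < n) ((l < z)%N && e l z))%N.
  rewrite /num_edges -sum1_card big_mkcond pair_big /=.
  by apply: eq_bigr => p _; rewrite inE; case: (_ && _).
rewrite num_edgesE mul2n -addnn.
under eq_bigr do under eq_bigr do rewrite e_split.
under eq_bigr do rewrite big_split /=.
rewrite big_split /=; congr (_ + _)%N.
by rewrite exchange_big /=; apply: eq_bigr => z _; apply: eq_bigr => l _; rewrite e_sym.
Qed.

Lemma sum_loop_degree : simple_graph e ->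
  \sum_l loop_degree l = (n + 2 * num_edges e)%:R.
Proof.
move=> simple; rewrite -(handshake simple) natrD natr_sum big_split /=.
rewrite sumr_const card_ord; congr (_ + _); apply: eq_bigr => l _.
by rewrite natr_sum; apply: eq_bigr => z _; rewrite mxE.
Qed.

End LazyRandomWalk.

Theorem theorem3p6 (R : realType) (n : nat) (e : rel 'I_n)
  (Hsimple : simple_graph e) (Hconn : connected_graph e)
  (c c' : nat) (W : 'M[R]_c) (B : 'M[R]_(c', c)) (U : nat -> 'M[R]_(n, c'))
  (i j : 'I_n) :
  exists cij : nat -> R,
    (forall (s t : nat) (X : 'M[R]_(n, c)), (s <= t)%N ->
       jacobian_XtXs (normadj R e) W B U s t X i j = cij (t - s)%N *: (W^T ^+ (t - s))) /\
    (cij @ \oo --> Num.sqrt ((1 + node_degree R e i) * (1 + node_degree R e j))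
                   / (n + 2 * num_edges e)%:R).
Proof.
exists (fun k => (normadj R e ^+ k) i j); split=> [s t X _|].
  exact: jacobian_XtXsE.
set S := \sum_l loop_degree R e l.
have S_gt0 : 0 < S.
  by rewrite /S sum_loop_degree // ltr0n addn_gt0 (leq_ltn_trans (leq0n i)).
have sqrt_gt0 l : 0 < Num.sqrt (loop_degree R e l).
  by rewrite sqrtr_gt0 loop_degree_gt0.
have -> : Num.sqrt (loop_degree R e i * loop_degree R e j)
          / (n + 2 * num_edges e)%:R =
    Num.sqrt (loop_degree R e i) / Num.sqrt (loop_degree R e j)
    * (loop_degree R e j / S).
  rewrite -sum_loop_degree // -/S sqrtrM ?(ltW (loop_degree_gt0 R e i)) //.
  rewrite -[X in _ = _ * (X / _)]sqr_sqrtr ?(ltW (loop_degree_gt0 R e j)) //.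
  by field; rewrite !lt0r_neq0 ?sqrt_gt0.
under eq_fun do rewrite normadjXE.
apply: cvgMl_tmp.
apply: (row_stochastic_cvg (m := n) (pi := fun x => loop_degree R e x / S) i
  (walk_mx_stochastic R e)
  _ (walk_mxX_lb R Hconn)); rewrite ?exprn_gt0 ?invr_gt0 ?ltr0Sn //.
- by move=> x; rewrite divr_ge0 ?ltW ?loop_degree_gt0.
- by rewrite -mulr_suml divff ?gt_eqF.
- exact: walk_mx_stationary.
Qed.
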